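(* Let $(\mathbf{H},m,\Delta)$ be a commutative and cocommutative (connected) set Hopf monoid, with each $\mathbf{H}[I]$ equipped with the reassembly partial order $\le_r$ (so that $\mathbf{H}$ is a self-adjoint poset Hopf monoid). Let $I=S\sqcup T$, $x\in\mathbf{H}[S]$ and $y\in\mathbf{H}[T]$. Then $\omega_x\cdot\omega_y=\omega_{x\cdot y}$ in $\mathbf{k}\mathbf{H}[I]$, where $x\cdot y=m_{S,T}(x,y)$ and, for $z\in\mathbf{H}[J]$, $\omega_z=\sum_{z\le_r w}\mu(z,w)\,w$ with $\mu$ the Möbius function of $(\mathbf{H}[J],\le_r)$.
   Context: $\mathbf{k}$ is a field of characteristic $0$. A (connected) set species $\mathbf{H}$ assigns to each finite set $I$ a finite set $\mathbf{H}[I]$, $\mathbf{H}[\emptyset]=\{1\}$, and bijections functorially to bijections. A set Hopf monoid has maps $m_{S,T}:\mathbf{H}[S]\times\mathbf{H}[T]\to\mathbf{H}[S\sqcup T]$ (natural, associative, unital) and $\Delta_{S,T}:\mathbf{H}[S\sqcup T]\to\mathbf{H}[S]\times\mathbf{H}[T]$ (natural, coassociative, counital), satisfying compatibility: for $I=S_1\sqcup S_2=T_1\sqcup T_2$, $A=S_1\cap T_1$, $B=S_1\cap T_2$, $C=S_2\cap T_1$, $D=S_2\cap T_2$, if $\Delta_{A,B}(x)=(x_A,x_B)$, $\Delta_{C,D}(y)=(y_C,y_D)$ then $\Delta_{T_1,T_2}(m_{S_1,S_2}(x,y))=(m_{A,C}(x_A,y_C),m_{B,D}(x_B,y_D))$.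 Commutative: $m_{S,T}(x,y)=m_{T,S}(y,x)$; cocommutative: $\Delta_{S,T}(x)=(y,z)\iff\Delta_{T,S}(x)=(z,y)$. Reassembly order: $x\le_r y$ in $\mathbf{H}[I]$ iff $y=m_{S_1,\dots,S_k}\circ\Delta_{S_1,\dots,S_k}(x)$ for some set partition $S_1\sqcup\dots\sqcup S_k=I$ (iterated maps via (co)associativity); for commutative cocommutative $\mathbf{H}$ this is a partial order. $\mathbf{k}\mathbf{H}[I]$ is the vector space with basis $\mathbf{H}[I]$, multiplication extended bilinearly. *)

From HB Require Import structures.
From mathcomp Require Import all_boot all_order fingroup perm all_algebra.
Set Implicit Arguments. Unset Strict Implicit. Unset Printing Implicit Defensive.
Import GRing.Theory.
Local Open Scope ring_scope.

(* A (connected) set species, restricted to the finite subsets of a finite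
   label type L, is encoded without dependent types: [shE] is the (finite)
   disjoint union of all H[I], I \subset L, and [hdom e] is the label set I
   with e \in H[I].  Thus H[I] = [set e | hdom e == I].
   Bijections between label sets are given by permutations of L ([relabel]),
   the action depending only on the restriction to the domain.
   [hmul x y] = m_{hdom x, hdom y}(x, y) (meaningful for disjoint domains);
   [hdelta S x] = Delta_{S, hdom x \ S}(x) (meaningful for S \subset hdom x). *)
Record setHopfData (L : finType) := SetHopfData {
  shE :> finType;
  hdom : shE -> {set L};
  relabel : {perm L} -> shE -> shE;
  hone : shE;
  hmul : shE -> shE -> shE;
  hdelta : {set L} -> shE -> shE * shE
}.

Section SetHopf.
Variables (L : finType) (H : setHopfData L).
Local Notation hdom := (@hdom L H).
Local Notation relabel := (@relabel L H).
Local Notation hone := (@hone L H).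
Local Notation hmul := (@hmul L H).
Local Notation hdelta := (@hdelta L H).

Definition is_set_species : Prop :=
  [/\ hdom hone = set0,
      (forall e, hdom e = set0 -> e = hone),
      (forall (s : {perm L}) x, hdom (relabel s x) = s @: hdom x) &
      [/\ (forall x, relabel 1%g x = x),
      (forall s t x, relabel (s * t)%g x = relabel t (relabel s x)) &
      (forall (s t : {perm L}) x, {in hdom x, s =1 t} -> relabel s x = relabel t x)]].

Definition is_set_Hopf_monoid : Prop :=
  is_set_species /\ [/\ 
      (forall x y, [disjoint hdom x & hdom y] -> hdom (hmul x y) = hdom x :|: hdom y),
      (forall (S : {set L}) x, S \subset hdom x ->
         hdom (hdelta S x).1 = S /\ hdom (hdelta S x).2 = hdom x :\: S) &
      (forall (s : {perm L}) x y, [disjoint hdom x & hdom y] ->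
         relabel s (hmul x y) = hmul (relabel s x) (relabel s y))] /\ [/\ 
      (forall (s : {perm L}) (S : {set L}) x, S \subset hdom x ->
         hdelta (s @: S) (relabel s x) =
           (relabel s (hdelta S x).1, relabel s (hdelta S x).2)),
      (forall x y z, [disjoint hdom x & hdom y] -> [disjoint hdom x & hdom z] ->
         [disjoint hdom y & hdom z] -> hmul (hmul x y) z = hmul x (hmul y z)),
      (forall x, hmul hone x = x /\ hmul x hone = x) &
      (forall (R S : {set L}) x, R \subset hdom x -> S \subset hdom x -> [disjoint R & S] ->
         let p := hdelta (R :|: S) x in let q := hdelta R p.1 in
         let r := hdelta R x in let t := hdelta S r.2 in
         [/\ q.1 = r.1, q.2 = t.1 & p.2 = t.2])] /\ [/\ 
      (forall x, hdelta set0 x = (hone, x) /\ hdelta (hdom x) x = (x, hone)) &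
      (forall x y (T1 : {set L}), [disjoint hdom x & hdom y] -> T1 \subset hdom x :|: hdom y ->
         let a := hdelta (T1 :&: hdom x) x in let b := hdelta (T1 :&: hdom y) y in
         hdelta T1 (hmul x y) = (hmul a.1 b.1, hmul a.2 b.2))].

Definition is_commutative : Prop :=
  forall x y, [disjoint hdom x & hdom y] -> hmul x y = hmul y x.

Definition is_cocommutative : Prop :=
  forall (S : {set L}) x, S \subset hdom x ->
    hdelta S x = ((hdelta (hdom x :\: S) x).2, (hdelta (hdom x :\: S) x).1).

(* m_{S1,...,Sk} o Delta_{S1,...,Sk} (x) for the ordered blocks S1,...,Sk,
   computed iteratively (well defined by (co)associativity). *)
Fixpoint reassemble (Ss : seq {set L}) (x : H) : H :=
  match Ss with
  | [::] => x
  | B :: Ss' => hmul (hdelta B x).1 (reassemble Ss' (hdelta B x).2)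
  end.

Definition le_r (x y : H) : bool :=
  [exists P : {set {set L}}, partition P (hdom x) && (y == reassemble (enum P) x)].

Definition lt_r (x y : H) : bool := (y != x) && le_r x y.

(* Moebius function of the poset (H, <=_r):
   mu(x,x) = 1, mu(x,y) = - sum_{x <= u < y} mu(x,u) if x < y, 0 otherwise.
   Strict chains have length < #|H|, so the fuel #|H|.+1 suffices. *)
Fixpoint mobius_fuel (R : pzRingType) (n : nat) (x y : H) : R :=
  match n with
  | 0 => 0
  | n'.+1 =>
      if x == y then 1
      else if le_r x y then
        - \sum_(u : H | le_r x u && lt_r u y) mobius_fuel R n' x u
      else 0
  end.

Definition mobius (R : pzRingType) (x y : H) : R := mobius_fuel R #|H|.+1 x y.

(* omega_z = sum_{z <=_r w} mu(z,w) w, as an element of k H (coefficient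
   functions H -> R; omega_z is supported in H[hdom z]). *)
Definition omega (R : pzRingType) (z : H) : {ffun H -> R} :=
  [ffun w => if le_r z w then mobius R z w else 0].

(* product kH[S] x kH[T] -> kH[S \sqcup T], bilinear extension of m_{S,T} *)
Definition kprod (R : pzRingType) (S T : {set L}) (a b : {ffun H -> R})
  : {ffun H -> R} :=
  [ffun w => \sum_(u : H | hdom u == S) \sum_(v : H | hdom v == T)
               (if hmul u v == w then a u * b v else 0)].

End SetHopf.

From HB Require Import structures.
From mathcomp Require Import all_boot all_order fingroup perm all_algebra.
From mathcomp Require Import zify.
Set Implicit Arguments. Unset Strict Implicit. Unset Printing Implicit Defensive.
Import GRing.Theory.

(* Write x|B for the restriction (Delta_{B, I \ B} x).1.  By (co)associativity and
   (co)commutativity, m_P o Delta_P (x) is the product of the restrictions x|B over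
   the blocks B of P, so x <=_r w iff w = prod_{B in P} x|B for a partition P of the
   labels of x; composing two such operations amounts to taking the common refinement
   of the partitions, which yields a partial order.  For x, y on disjoint label sets,
   splitting xy along P is splitting x along P /\ S and y along P /\ T, so
   w |-> (w|S, w|T) maps the interval [xy, uv] isomorphically onto [x, u] x [y, v];
   hence mu(xy, uv) = mu(x, u) mu(y, v).  Since uv determines u and v, comparing the
   coefficients of omega_x omega_y and omega_(xy) at each w gives the identity. *)

Section DisjointSeq.
Variable L : finType.
Implicit Types (A B C D E : {set L}) (s t : seq {set L}).

Lemma disjoint_setUl A B C : [disjoint A :|: B & C] = [disjoint A & C] && [disjoint B & C].
Proof. by rewrite -!setI_eq0 setIUl setU_eq0. Qed.

Lemma disjoint_setUr A B C : [disjoint C & A :|: B] = [disjoint C & A] && [disjoint C & B].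
Proof. by rewrite -!setI_eq0 setIUr setU_eq0. Qed.

(* The analogue of [trivIset] for sequences: the blocks are pairwise disjoint, but the
   empty set may occur several times. *)
Definition trivIseq s := (\sum_(A <- s) #|A| == #|\bigcup_(A <- s) A|)%N.

Definition seq_partition s D := trivIseq s && (\bigcup_(A <- s) A == D).

Lemma trivIseq_nil : trivIseq [::].
Proof. by rewrite /trivIseq !big_nil cards0. Qed.

Lemma trivIseq_cons A s :
  trivIseq (A :: s) = [disjoint A & \bigcup_(B <- s) B] && trivIseq s.
Proof.
have card_le t : (#|\bigcup_(B <- t) B| <= \sum_(B <- t) #|B|)%N.
  by elim: t => [|B t IH]; rewrite ?big_nil ?cards0 // !big_cons cardsU; lia.
have := card_le s; have := subset_leq_card (subsetIl A (\bigcup_(B <- s) B)).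
rewrite /trivIseq !big_cons cardsU -setI_eq0 -cards_eq0 => h1 h2.
apply/eqP/andP => [h|[/eqP h3 /eqP h4]]; [split; apply/eqP|]; lia.
Qed.

Lemma trivIseq_cat s t : trivIseq (s ++ t) =
  [&& [disjoint \bigcup_(A <- s) A & \bigcup_(B <- t) B], trivIseq s & trivIseq t].
Proof.
elim: s => [|A s IH]; first by rewrite big_nil /= -setI_eq0 set0I eqxx trivIseq_nil.
rewrite cat_cons !trivIseq_cons IH big_cat big_cons /= disjoint_setUl disjoint_setUr.
by rewrite -!andbA; bool_congr.
Qed.

Lemma perm_trivIseq s t : perm_eq s t -> trivIseq s = trivIseq t.
Proof. by move=> st; rewrite /trivIseq (perm_big _ st) (perm_big _ st). Qed.

Lemma trivIseq_enum (P : {set {set L}}) : trivIseq (enum P) = trivIset P.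
Proof. by rewrite /trivIseq /trivIset /cover !big_enum. Qed.

Lemma bigcup_seq_sup A s : A \in s -> A \subset \bigcup_(B <- s) B.
Proof. by move=> As; rewrite (big_rem A As) subsetUl. Qed.

Lemma bigcup_seq_sub s D : (forall A, A \in s -> A \subset D) -> \bigcup_(A <- s) A \subset D.
Proof.
elim: s => [|A s IH] sD; rewrite ?big_nil ?sub0set // big_cons subUset sD ?inE ?eqxx //.
by apply: IH => B Bs; apply: sD; rewrite inE Bs orbT.
Qed.

Lemma seq_partition_enum (P : {set {set L}}) D : partition P D -> seq_partition (enum P) D.
Proof. by case/and3P => cP tP _; rewrite /seq_partition trivIseq_enum tP big_enum. Qed.

Lemma trivIseqP s : trivIseq s -> {in s &, forall A B, A != B -> [disjoint A & B]}.
Proof.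
elim: s => [|C s IH] //; rewrite trivIseq_cons => /andP[dC /IH{}IH] A B.
have dCs D : D \in s -> [disjoint C & D] by move=> Ds; apply: disjointWr dC; apply: bigcup_seq_sup.
rewrite !inE => /predU1P[->|As] /predU1P[->|Bs]; rewrite ?eqxx //; first by move=> _; exact: dCs.
  by rewrite disjoint_sym => _; exact: dCs.
exact: IH.
Qed.

Lemma trivIseq_map_sub (f : {set L} -> {set L}) s :
  (forall A, A \in s -> f A \subset A) -> trivIseq s -> trivIseq (map f s).
Proof.
elim: s => [|A s IH] // fs; rewrite /= !trivIseq_cons => /andP[dA /IH-> //]; last first.
  by move=> B Bs; apply: fs; rewrite inE Bs orbT.
rewrite andbT; apply: disjointW dA; first by apply: fs; rewrite inE eqxx.
apply: bigcup_seq_sub => _ /mapP[B Bs ->].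
by apply: subset_trans (fs B _) (bigcup_seq_sup Bs); rewrite inE Bs orbT.
Qed.

Lemma trivIseq_flatten (ss : seq (seq {set L})) :
  trivIseq (flatten ss) = all trivIseq ss && trivIseq [seq \bigcup_(A <- s) A | s <- ss].
Proof.
elim: ss => [|s ss IH] /=; first by rewrite trivIseq_nil.
by rewrite trivIseq_cat trivIseq_cons IH big_flatten big_map /= -!andbA; bool_congr.
Qed.

Lemma bigcup_seq_setIl A s : \bigcup_(C <- [seq A :&: B | B <- s]) C = A :&: \bigcup_(B <- s) B.
Proof. by rewrite big_map big_distrr. Qed.

Lemma bigcup_seq_setIr A s : \bigcup_(C <- [seq B :&: A | B <- s]) C = (\bigcup_(B <- s) B) :&: A.
Proof. by rewrite big_map big_distrl. Qed.

Definition meet t s := [seq A :&: B | A <- t, B <- s].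

Lemma trivIseq_meet t s : trivIseq t -> trivIseq s -> trivIseq (meet t s).
Proof.
move=> tt ts; rewrite trivIseq_flatten; apply/andP; split.
  by apply/allP => _ /mapP[A _ ->]; apply: trivIseq_map_sub ts => B _; apply: subsetIr.
rewrite -map_comp; apply: trivIseq_map_sub tt => A _ /=.
by rewrite bigcup_seq_setIl subsetIl.
Qed.

Lemma bigcup_meet t s :
  \bigcup_(C <- meet t s) C = (\bigcup_(A <- t) A) :&: \bigcup_(B <- s) B.
Proof.
rewrite big_flatten big_map; under eq_bigr do rewrite bigcup_seq_setIl.
by rewrite big_distrl.
Qed.

Lemma seq_partition_meet t s D :
  seq_partition t D -> seq_partition s D -> seq_partition (meet t s) D.
Proof.
case/andP=> tt /eqP tD /andP[ts /eqP sD].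
by rewrite /seq_partition trivIseq_meet // bigcup_meet tD sD setIid eqxx.
Qed.

Lemma seq_partition_cat s t D E : [disjoint D & E] ->
  seq_partition s D -> seq_partition t E -> seq_partition (s ++ t) (D :|: E).
Proof.
move=> dDE /andP[ts /eqP sD] /andP[tt /eqP tE].
by rewrite /seq_partition trivIseq_cat big_cat sD tE dDE ts tt eqxx.
Qed.

Lemma seq_partition_setIr s D A :
  seq_partition s D -> A \subset D -> seq_partition [seq B :&: A | B <- s] A.
Proof.
case/andP => ts /eqP sD AD; rewrite /seq_partition bigcup_seq_setIr sD (setIidPr AD) eqxx andbT.
by apply: trivIseq_map_sub ts => B _; apply: subsetIl.
Qed.

Lemma trivIseq_setI4 A B D E : [disjoint A & B] -> [disjoint D & E] ->
  trivIseq [:: A :&: D; A :&: E; B :&: D; B :&: E].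
Proof.
have dI (A1 A2 X1 X2 : {set L}) : [disjoint A1 & A2] || [disjoint X1 & X2] ->
    [disjoint A1 :&: X1 & A2 :&: X2].
  by case/orP => d; apply: disjointW d; rewrite ?subsetIl ?subsetIr.
move=> dAB dDE; rewrite !trivIseq_cons trivIseq_nil !big_cons big_nil setU0 !disjoint_setUr.
by rewrite !dI ?dAB ?dDE ?orbT // -setI_eq0 setI0 eqxx.
Qed.

Definition blocks s : {set {set L}} := [set A in s | A != set0].

Lemma perm_blocks s : trivIseq s -> perm_eq [seq A <- s | A != set0] (enum (blocks s)).
Proof.
move=> ts; apply: uniq_perm; rewrite ?enum_uniq //; last first.
  by move=> A; rewrite mem_filter mem_enum inE andbC.
elim: s ts => [|A s IH] //; rewrite trivIseq_cons => /andP[dA /IH{}IH] /=.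
case: ifP => [nA|_] //=; rewrite IH andbT mem_filter nA /=; apply/negP => As.
by move: (disjointWr (bigcup_seq_sup As) dA) nA; rewrite -setI_eq0 setIid => ->.
Qed.

Lemma bigcup_nonempty s : \bigcup_(A <- s | A != set0) A = \bigcup_(A <- s) A.
Proof. by rewrite big_mkcond; apply: eq_bigr => A _; case: eqP => [->|]. Qed.

Lemma trivIseq_nonempty s : trivIseq [seq A <- s | A != set0] = trivIseq s.
Proof.
have sum0 : (\sum_(A <- s | A != set0) #|A| = \sum_(A <- s) #|A|)%N.
  by rewrite big_mkcond; apply: eq_bigr => A _; case: eqP => [->|]; rewrite ?cards0.
by rewrite /trivIseq !big_filter bigcup_nonempty sum0.
Qed.

Lemma partition_blocks s D : seq_partition s D -> partition (blocks s) D.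
Proof.
case/andP => ts /eqP sD; have ps := perm_blocks ts.
apply/and3P; split; last by rewrite inE eqxx andbF.
  by rewrite /cover -big_enum -(perm_big _ ps) big_filter bigcup_nonempty sD.
by rewrite -trivIseq_enum -(perm_trivIseq ps) trivIseq_nonempty.
Qed.

Lemma blocks_meet_refine t s : trivIseq s -> blocks (meet s (meet t s)) = blocks (meet t s).
Proof.
move=> ts; apply/setP => C; rewrite !inE.
have [->|nC] := eqVneq C set0; rewrite ?andbF // !andbT; apply/idP/idP.
  case/allpairsP => -[A D] /= [As /allpairsP[[E B] /= [Et Bs ->]] EC]; subst C.
  have [eAB|neAB] := eqVneq A B; first by rewrite eAB setICA setIid allpairs_f.
  by move: nC; rewrite setICA (disjoint_setI0 (trivIseqP ts As Bs neAB)) setI0 eqxx.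
case/allpairsP => -[E B] /= [Et Bs ->]; apply/allpairsP; exists (B, E :&: B) => /=.
by rewrite setICA setIid Bs allpairs_f.
Qed.
End DisjointSeq.

Section SetHopfMonoid.
Variables (L : finType) (H : setHopfData L).
Local Notation hdom := (@hdom L H).
Local Notation hone := (@hone L H).
Local Notation hmul := (@hmul L H).
Local Notation hdelta := (@hdelta L H).
Implicit Types (A B C D : {set L}) (s t : seq {set L}) (a b c u v w x y : H).

Hypothesis hdom1 : hdom hone = set0.
Hypothesis hdomM : forall a b, [disjoint hdom a & hdom b] -> hdom (hmul a b) = hdom a :|: hdom b.
Hypothesis hdomD : forall B x, B \subset hdom x ->
  hdom (hdelta B x).1 = B /\ hdom (hdelta B x).2 = hdom x :\: B.
Hypothesis hmulA : forall a b c, [disjoint hdom a & hdom b] -> [disjoint hdom a & hdom c] ->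
  [disjoint hdom b & hdom c] -> hmul (hmul a b) c = hmul a (hmul b c).
Hypothesis hmul1 : forall a, hmul hone a = a.
Hypothesis hmulr1 : forall a, hmul a hone = a.
Hypothesis hmulC : forall a b, [disjoint hdom a & hdom b] -> hmul a b = hmul b a.
Hypothesis coassoc : forall A B x, A \subset hdom x -> B \subset hdom x -> [disjoint A & B] ->
  (hdelta A (hdelta (A :|: B) x).1).1 = (hdelta A x).1.
Hypothesis hdelta0 : forall x, (hdelta set0 x).1 = hone.
Hypothesis hdeltaT : forall x, (hdelta (hdom x) x).1 = x.
Hypothesis hdelta_mul : forall a b B, [disjoint hdom a & hdom b] -> B \subset hdom a :|: hdom b ->
  hdelta B (hmul a b) =
    (hmul (hdelta (B :&: hdom a) a).1 (hdelta (B :&: hdom b) b).1,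
     hmul (hdelta (B :&: hdom a) a).2 (hdelta (B :&: hdom b) b).2).
Hypothesis cocomm : forall B x, B \subset hdom x ->
  hdelta B x = ((hdelta (hdom x :\: B) x).2, (hdelta (hdom x :\: B) x).1).

Definition res B x : H := (hdelta B x).1.

Lemma hdom_res B x : B \subset hdom x -> hdom (res B x) = B.
Proof. by case/hdomD. Qed.

Lemma hdelta_snd B x : B \subset hdom x -> (hdelta B x).2 = res (hdom x :\: B) x.
Proof. by move=> sBx; rewrite (cocomm sBx). Qed.

Lemma res_res A B x : A \subset B -> B \subset hdom x -> res A (res B x) = res A x.
Proof.
move=> sAB sBx; have sAx := subset_trans sAB sBx.
have dA : [disjoint A & B :\: A] by rewrite -setI_eq0 setDE setICA setICr setI0.
have := coassoc sAx (subset_trans (subsetDl B A) sBx) dA.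
by have -> : A :|: B :\: A = B by rewrite -{1}(setIidPr sAB) setID.
Qed.

Lemma res_hdom x : res (hdom x) x = x.
Proof. exact: hdeltaT. Qed.

Lemma res0 x : res set0 x = hone.
Proof. exact: hdelta0. Qed.

Definition resI C a := res (C :&: hdom a) a.

Lemma resIE C a : C \subset hdom a -> resI C a = res C a.
Proof. by move=> sCa; rewrite /resI (setIidPl sCa). Qed.

Lemma resI_one C : resI C hone = hone.
Proof. by rewrite /resI hdom1 setI0 res0. Qed.

Lemma resI_res C B x : B \subset hdom x -> resI C (res B x) = res (C :&: B) x.
Proof. by move=> sBx; rewrite /resI hdom_res // res_res ?subsetIr. Qed.

Lemma resI_mul C a b :
  [disjoint hdom a & hdom b] -> resI C (hmul a b) = hmul (resI C a) (resI C b).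
Proof.
move=> dab; rewrite /resI /res (hdomM dab) (hdelta_mul dab (subsetIr _ _)) /=.
by rewrite -!setIA (setIidPr (subsetUl _ _)) (setIidPr (subsetUr _ _)).
Qed.

Lemma res_mul B a b : [disjoint hdom a & hdom b] -> B \subset hdom a :|: hdom b ->
  res B (hmul a b) = hmul (res (B :&: hdom a) a) (res (B :&: hdom b) b).
Proof. by move=> dab sB; rewrite -resIE ?hdomM // resI_mul. Qed.

Lemma res_mul_subl B a b :
  [disjoint hdom a & hdom b] -> B \subset hdom a -> res B (hmul a b) = res B a.
Proof.
move=> dab sBa; rewrite res_mul ?(subset_trans sBa (subsetUl _ _)) // (setIidPl sBa).
by rewrite (disjoint_setI0 (disjointWl sBa dab)) res0 hmulr1.
Qed.

Lemma res_mul_subr B a b :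
  [disjoint hdom a & hdom b] -> B \subset hdom b -> res B (hmul a b) = res B b.
Proof. by move=> dab sBb; rewrite hmulC // res_mul_subl // disjoint_sym. Qed.

Lemma res_mull a b : [disjoint hdom a & hdom b] -> res (hdom a) (hmul a b) = a.
Proof. by move=> dab; rewrite res_mul_subl ?res_hdom. Qed.

Lemma res_mulr a b : [disjoint hdom a & hdom b] -> res (hdom b) (hmul a b) = b.
Proof. by move=> dab; rewrite res_mul_subr ?res_hdom. Qed.

Lemma hmul_inj u v u' v' : [disjoint hdom u & hdom v] ->
  hdom u' = hdom u -> hdom v' = hdom v -> hmul u v = hmul u' v' -> u = u' /\ v = v'.
Proof.
move=> duv du dv E; have duv' : [disjoint hdom u' & hdom v'] by rewrite du dv.
by split; [rewrite -(res_mull duv) E -du res_mull | rewrite -(res_mulr duv) E -dv res_mulr].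
Qed.

Definition hprod (s : seq H) : H := foldr hmul hone s.

Lemma trivIseq_hdom_cons a (s : seq H) : trivIseq (map hdom (a :: s)) =
  [disjoint hdom a & \bigcup_(b <- s) hdom b] && trivIseq (map hdom s).
Proof. by rewrite /= trivIseq_cons big_map. Qed.

Lemma trivIseq_hdom_cat (s t : seq H) : trivIseq (map hdom (s ++ t)) =
  [&& [disjoint \bigcup_(a <- s) hdom a & \bigcup_(b <- t) hdom b],
      trivIseq (map hdom s) & trivIseq (map hdom t)].
Proof. by rewrite map_cat trivIseq_cat !big_map. Qed.

Lemma hdom_hprod (s : seq H) :
  trivIseq (map hdom s) -> hdom (hprod s) = \bigcup_(a <- s) hdom a.
Proof.
elim: s => [|a s IH]; first by rewrite big_nil hdom1.
by rewrite trivIseq_hdom_cons big_cons => /andP[da /IH{}IH] /=; rewrite hdomM IH.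
Qed.

Lemma hprod_cat (s t : seq H) :
  trivIseq (map hdom (s ++ t)) -> hprod (s ++ t) = hmul (hprod s) (hprod t).
Proof.
elim: s => [|a s IH] /=; first by rewrite hmul1.
rewrite trivIseq_hdom_cons => /andP[dast dst]; rewrite IH //.
move: dst dast; rewrite trivIseq_hdom_cat big_cat disjoint_setUr.
by case/and3P=> dst ds dt /andP[das dat]; rewrite hmulA ?hdom_hprod.
Qed.

Lemma hprod_rem (s : seq H) a :
  trivIseq (map hdom s) -> a \in s -> hprod s = hmul a (hprod (rem a s)).
Proof.
elim: s => [|b s IH] //= ds; have [->|nba] := eqVneq b a; first by [].
rewrite inE eq_sym (negbTE nba) /= => sa; have ps := perm_to_rem sa.
move: (ds); rewrite trivIseq_hdom_cons => /andP[dbs {}ds].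
have dars : trivIseq (map hdom (a :: rem a s)) by rewrite -(perm_trivIseq (perm_map hdom ps)).
move: (dars); rewrite trivIseq_hdom_cons => /andP[dar drs].
move: dbs; rewrite (perm_big _ ps) big_cons disjoint_setUr => /andP[dba dbr].
rewrite -hdom_hprod // in dar dbr.
by rewrite IH // -hmulA // (hmulC dba) hmulA // disjoint_sym.
Qed.

Lemma hprod_perm (s t : seq H) : trivIseq (map hdom s) -> perm_eq s t -> hprod s = hprod t.
Proof.
elim: s t => [|a s IH] t ds st; first by move: st; rewrite perm_sym => /perm_nilP ->.
have ta : a \in t by rewrite -(perm_mem st) mem_head.
have dt : trivIseq (map hdom t) by rewrite -(perm_trivIseq (perm_map hdom st)).
rewrite (hprod_rem dt ta) /=; congr hmul; apply: IH.
  by move: ds; rewrite trivIseq_hdom_cons => /andP[].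
by rewrite -(perm_cons a) (perm_trans st (perm_to_rem ta)).
Qed.

Lemma hprod_flatten (ss : seq (seq H)) :
  trivIseq (map hdom (flatten ss)) -> hprod (flatten ss) = hprod (map hprod ss).
Proof.
elim: ss => [|s ss IH] //= dss; rewrite hprod_cat // IH //.
by move: dss; rewrite trivIseq_hdom_cat => /and3P[].
Qed.

Lemma resI_hprod C (s : seq H) :
  trivIseq (map hdom s) -> resI C (hprod s) = hprod (map (resI C) s).
Proof.
elim: s => [|a s IH] /=; first by rewrite resI_one.
by rewrite trivIseq_hdom_cons => /andP[das ds]; rewrite resI_mul ?hdom_hprod ?IH.
Qed.

Lemma hmulACA a b c d : trivIseq (map hdom [:: a; b; c; d]) ->
  hmul (hmul a b) (hmul c d) = hmul (hmul a c) (hmul b d).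
Proof.
have hmul2 e f : hmul e f = hprod [:: e; f] by rewrite /= hmulr1.
have p : perm_eq [:: a; b; c; d] [:: a; c; b; d].
  by rewrite (perm_cons a) -[[:: b; c; d]]/([:: b] ++ [:: c] ++ [:: d]) perm_catCA.
move=> dabcd; have dacbd := dabcd; rewrite (perm_trivIseq (perm_map hdom p)) in dacbd.
by rewrite (hmul2 a) (hmul2 c) (hmul2 a) (hmul2 b) -!hprod_cat //; apply: hprod_perm.
Qed.

Definition splits s x : H := hprod [seq res B x | B <- s].

Lemma map_hdom_res s x :
  \bigcup_(B <- s) B \subset hdom x -> map hdom [seq res B x | B <- s] = s.
Proof.
move=> sx; rewrite -map_comp -[RHS]map_id; apply/eq_in_map => B Bs /=.
by rewrite hdom_res // (subset_trans (bigcup_seq_sup Bs) sx).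
Qed.

Lemma hdom_splits s x : trivIseq s -> \bigcup_(B <- s) B \subset hdom x ->
  hdom (splits s x) = \bigcup_(B <- s) B.
Proof.
move=> ts sx; rewrite hdom_hprod ?map_hdom_res // big_map; apply: eq_big_seq => B Bs.
by rewrite hdom_res // (subset_trans (bigcup_seq_sup Bs) sx).
Qed.

Lemma splits_res s D x : \bigcup_(B <- s) B \subset D -> D \subset hdom x ->
  splits s (res D x) = splits s x.
Proof.
move=> sD Dx; congr hprod; apply/eq_in_map => B Bs.
by rewrite res_res // (subset_trans (bigcup_seq_sup Bs) sD).
Qed.

Lemma reassemble_splits s x : seq_partition s (hdom x) -> reassemble s x = splits s x.
Proof.
elim: s x => [|B s IH] x /andP[ts /eqP sx].
  by rewrite /splits /= -(res0 x) -{1}(res_hdom x) -sx big_nil.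
move: ts sx; rewrite trivIseq_cons big_cons => /andP[dB ts] sx.
have sBx : B \subset hdom x by rewrite -sx subsetUl.
have sxB : hdom x :\: B = \bigcup_(C <- s) C.
  by rewrite -sx setDUl setDv set0U; apply/setDidPl; rewrite disjoint_sym.
have sx' : \bigcup_(C <- s) C \subset hdom x by rewrite -sxB subsetDl.
rewrite /= hdelta_snd // sxB IH ?splits_res //.
by rewrite /seq_partition ts hdom_res ?eqxx.
Qed.

Lemma splits_blocks s x : trivIseq s -> \bigcup_(B <- s) B \subset hdom x ->
  splits s x = splits (enum (blocks s)) x.
Proof.
move=> ts sx; have -> : splits s x = splits [seq B <- s | B != set0] x.
  by rewrite /splits; elim: s {ts sx} => //= B s IH; case: eqP => [->|_] /=; rewrite IH ?res0 ?hmul1.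
apply: hprod_perm; last exact/perm_map/perm_blocks.
by rewrite map_hdom_res ?trivIseq_nonempty // big_filter bigcup_nonempty.
Qed.

Lemma le_rP x w : reflect (exists2 s, seq_partition s (hdom x) & w = splits s x) (le_r x w).
Proof.
apply: (iffP existsP) => [[P /andP[pP /eqP ->]]|[s ps ->]].
  by have ps := seq_partition_enum pP; exists (enum P); rewrite ?reassemble_splits.
have pP := partition_blocks ps; case/andP: ps => ts /eqP sx.
exists (blocks s); rewrite pP reassemble_splits ?seq_partition_enum //.
by rewrite -splits_blocks ?sx ?eqxx.
Qed.

Lemma le_r_hdom x w : le_r x w -> hdom w = hdom x.
Proof. by case/le_rP => s /andP[ts /eqP sx] ->; rewrite hdom_splits ?sx. Qed.

Lemma le_r_refl x : le_r x x.
Proof.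
apply/le_rP; exists [:: hdom x]; last by rewrite /splits /= res_hdom hmulr1.
by rewrite /seq_partition trivIseq_cons trivIseq_nil big_cons big_nil setU0 -setI_eq0 setI0 !eqxx.
Qed.

Lemma splits_splits s t x : seq_partition s (hdom x) -> seq_partition t (hdom x) ->
  splits t (splits s x) = splits (meet t s) x.
Proof.
move=> /andP[ts /eqP sx] /andP[tt /eqP tx].
have mx : \bigcup_(C <- meet t s) C \subset hdom x by rewrite bigcup_meet sx tx setIid.
have ds : trivIseq (map hdom [seq res B x | B <- s]) by rewrite map_hdom_res ?sx.
rewrite /splits /meet map_flatten hprod_flatten; last first.
  by rewrite -map_flatten map_hdom_res ?trivIseq_meet.
rewrite -!map_comp; congr hprod; apply/eq_in_map => C Ct /=.
have Cx : C \subset hdom (splits s x) by rewrite hdom_splits ?sx // -tx bigcup_seq_sup.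
rewrite -resIE // resI_hprod // -!map_comp; congr hprod; apply/eq_in_map => B Bs /=.
by rewrite resI_res // -sx bigcup_seq_sup.
Qed.

Lemma le_r_trans x w z : le_r x w -> le_r w z -> le_r x z.
Proof.
move=> xw /le_rP[t]; rewrite (le_r_hdom xw) => pt ->; case/le_rP: xw => s ps ->.
by apply/le_rP; exists (meet t s); rewrite ?seq_partition_meet ?splits_splits.
Qed.

Lemma le_r_anti x w : le_r x w -> le_r w x -> w = x.
Proof.
move=> xw /le_rP[t]; rewrite (le_r_hdom xw) => pt; case/le_rP: xw => s ps ->.
(* x = splits r x for the refinement r := meet t s of s, and splitting along s
   something already split along a refinement of s changes nothing. *)
have pr := seq_partition_meet pt ps; have /andP[tr /eqP rx] := pr.
have /andP[trr /eqP rrx] := seq_partition_meet ps pr; have /andP[ts _] := ps.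
rewrite splits_splits // => xE; rewrite {1}xE splits_splits // splits_blocks ?rrx //.
by rewrite blocks_meet_refine // -splits_blocks ?rx -?xE.
Qed.

Lemma splits_cat s t x y : [disjoint hdom x & hdom y] ->
  seq_partition s (hdom x) -> seq_partition t (hdom y) ->
  splits (s ++ t) (hmul x y) = hmul (splits s x) (splits t y).
Proof.
move=> dxy ps pt; have /andP[_ /eqP sx] := ps; have /andP[_ /eqP ty] := pt.
have -> : splits (s ++ t) (hmul x y) = hprod ([seq res B x | B <- s] ++ [seq res B y | B <- t]).
  rewrite /splits map_cat; congr (hprod (_ ++ _)); apply/eq_in_map => B Bs.
    by rewrite res_mul_subl // -sx bigcup_seq_sup.
  by rewrite res_mul_subr // -ty bigcup_seq_sup.
rewrite hprod_cat // map_cat !map_hdom_res ?sx ?ty //.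
by case/andP: (seq_partition_cat dxy ps pt).
Qed.

Lemma splits_mul s x y : [disjoint hdom x & hdom y] ->
  trivIseq s -> \bigcup_(B <- s) B \subset hdom x :|: hdom y ->
  splits s (hmul x y) =
    hmul (splits [seq B :&: hdom x | B <- s] x) (splits [seq B :&: hdom y | B <- s] y).
Proof.
move=> dxy; elim: s => [|B s IH] /=; first by rewrite /splits /= hmul1.
rewrite trivIseq_cons big_cons subUset => /andP[dB ts] /andP[sB ss].
rewrite /splits /= res_mul // -!/(splits _ _) IH //.
have hdom_splitsI z : hdom (splits [seq C :&: hdom z | C <- s] z) = (\bigcup_(C <- s) C) :&: hdom z.
  rewrite hdom_splits ?bigcup_seq_setIr ?subsetIr //.
  by apply: trivIseq_map_sub ts => C _; apply: subsetIl.
by rewrite hmulACA //= !hdom_res ?subsetIr // !hdom_splitsI trivIseq_setI4.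
Qed.

Lemma le_r_mul x y u v : [disjoint hdom x & hdom y] -> le_r x u -> le_r y v ->
  le_r (hmul x y) (hmul u v).
Proof.
move=> dxy /le_rP[s ps ->] /le_rP[t pt ->]; apply/le_rP; exists (s ++ t).
  by rewrite hdomM // seq_partition_cat.
by rewrite splits_cat.
Qed.

Lemma le_r_mul_inv x y w : [disjoint hdom x & hdom y] -> le_r (hmul x y) w ->
  exists u v, [/\ le_r x u, le_r y v & w = hmul u v].
Proof.
move=> dxy /le_rP[s]; rewrite hdomM // => ps ->; have /andP[ts /eqP sxy] := ps.
exists (splits [seq B :&: hdom x | B <- s] x), (splits [seq B :&: hdom y | B <- s] y).
split; last by rewrite splits_mul ?sxy.
  by apply/le_rP; exists [seq B :&: hdom x | B <- s]; rewrite ?(seq_partition_setIr ps) ?subsetUl.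
by apply/le_rP; exists [seq B :&: hdom y | B <- s]; rewrite ?(seq_partition_setIr ps) ?subsetUr.
Qed.

Lemma le_r_mul2 x y u v : [disjoint hdom x & hdom y] ->
  hdom u = hdom x -> hdom v = hdom y ->
  le_r (hmul x y) (hmul u v) = le_r x u && le_r y v.
Proof.
move=> dxy dux dvy; apply/idP/andP => [|[xu yv]]; last exact: le_r_mul.
case/(le_r_mul_inv dxy) => u' [v' [xu' yv' E]].
have duv : [disjoint hdom u & hdom v] by rewrite dux dvy.
by have [-> ->] := hmul_inj duv (etrans (le_r_hdom xu') (esym dux)) (etrans (le_r_hdom yv') (esym dvy)) E.
Qed.

Lemma le_r_mul_res x y w : [disjoint hdom x & hdom y] -> le_r (hmul x y) w ->
  [/\ le_r x (res (hdom x) w), le_r y (res (hdom y) w)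
     & w = hmul (res (hdom x) w) (res (hdom y) w)].
Proof.
move=> dxy /(le_r_mul_inv dxy)[u [v [xu yv ->]]].
have duv : [disjoint hdom u & hdom v] by rewrite (le_r_hdom xu) (le_r_hdom yv).
by rewrite -(le_r_hdom xu) -(le_r_hdom yv) res_mull ?res_mulr.
Qed.

Local Open Scope ring_scope.

Definition card_itv_co a b := #|[set c | le_r a c && lt_r c b]|.

Lemma card_itv_co_lt a b c : le_r a c -> lt_r c b -> (card_itv_co a c < card_itv_co a b)%N.
Proof.
move=> ac /andP[nbc cb]; apply: proper_card; apply/properP; split.
  apply/subsetP => d; rewrite !inE => /andP[ad /andP[ndc dc]].
  rewrite ad /lt_r (le_r_trans dc cb) andbT /=; apply: contra nbc => /eqP ebd.
  by move: dc; rewrite -ebd => bc; rewrite (le_r_anti cb bc).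
by exists c; rewrite !inE ?ac /lt_r ?eqxx ?nbc.
Qed.

Lemma mobius_fuel_stable (R : pzRingType) n m a b :
  (card_itv_co a b < n)%N -> (card_itv_co a b < m)%N ->
  mobius_fuel R n a b = mobius_fuel R m a b.
Proof.
elim: n m a b => [|n IH] [|m] a b //= hn hm.
case: (a == b) => //; case: (le_r a b) => //; congr (- _).
apply: eq_bigr => c /andP[ac cb]; have := card_itv_co_lt ac cb => ?; apply: IH; lia.
Qed.

Lemma mobius_rec (R : pzRingType) a b : mobius R a b =
  if a == b then 1
  else if le_r a b then - \sum_(c | le_r a c && lt_r c b) mobius R a c else 0.
Proof.
rewrite [LHS]/mobius [LHS]/=; case: (a == b) => //; case: (le_r a b) => //; congr (- _).
apply: eq_bigr => c /andP[ac cb].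
have lt_cH : (card_itv_co a c < #|H|)%N := leq_trans (card_itv_co_lt ac cb) (max_card _).
by apply: mobius_fuel_stable => //; apply: ltnW.
Qed.

Lemma sum_itv_refl (R : nmodType) (F : H -> R) a :
  \sum_(c | le_r a c && le_r c a) F c = F a.
Proof.
rewrite (big_pred1 a) // => c; apply/andP/eqP => [[ac ca]|->]; last by rewrite le_r_refl.
exact: le_r_anti.
Qed.

Lemma sum_itv_split (R : nmodType) (F : H -> R) a b : le_r a b -> a != b ->
  \sum_(c | le_r a c && le_r c b) F c = F b + \sum_(c | le_r a c && lt_r c b) F c.
Proof.
move=> ab nab; rewrite (bigD1 b) /= ?ab ?le_r_refl //; congr (_ + _).
by apply: eq_bigl => c; rewrite /lt_r [b == c]eq_sym -andbA [le_r c b && _]andbC.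
Qed.

Lemma mobius_itv_sum (R : pzRingType) a b : le_r a b ->
  \sum_(c | le_r a c && le_r c b) mobius R a c = (a == b)%:R.
Proof.
move=> ab; have [<-|nab] := eqVneq a b; first by rewrite sum_itv_refl mobius_rec eqxx.
by rewrite sum_itv_split // mobius_rec (negbTE nab) ab addNr.
Qed.

Lemma mobius_unique (R : pzRingType) a (f : H -> R) :
  (forall b, le_r a b -> \sum_(c | le_r a c && le_r c b) f c = (a == b)%:R) ->
  forall b, le_r a b -> f b = mobius R a b.
Proof.
move=> fsum b; move: {2}(card_itv_co a b).+1 (ltnSn (card_itv_co a b)) => n.
elim: n b => // n IH b lt_bn ab; have := fsum b ab; rewrite mobius_rec.
have [<-|nab] := eqVneq a b; first by rewrite sum_itv_refl.
rewrite sum_itv_split // ab => /eqP; rewrite addr_eq0 => /eqP ->; congr (- _).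
apply: eq_bigr => c /andP[ac cb]; apply: IH => //.
exact: leq_trans (card_itv_co_lt ac cb) _.
Qed.

Lemma sum_itv_mul (R : nmodType) (F : H -> R) x y u v : [disjoint hdom x & hdom y] ->
  le_r x u -> le_r y v ->
  \sum_(w | le_r (hmul x y) w && le_r w (hmul u v)) F w =
  \sum_(c | le_r x c && le_r c u) \sum_(d | le_r y d && le_r d v) F (hmul c d).
Proof.
move=> dxy xu yv; rewrite pair_big_dep /=.
rewrite (reindex_onto (fun p : H * H => hmul p.1 p.2) (fun w => (res (hdom x) w, res (hdom y) w))).
  apply: eq_bigl => -[c d] /=.
  have [/andP[xc yd]|] := boolP (le_r x c && le_r y d).
    have [dc dd] := (le_r_hdom xc, le_r_hdom yd).
    have dcd : [disjoint hdom c & hdom d] by rewrite dc dd.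
    rewrite le_r_mul // le_r_mul2 ?(le_r_hdom xu) ?(le_r_hdom yv) ?dc ?dd // xc yd /=.
    by rewrite -dc -dd res_mull ?res_mulr ?eqxx ?andbT.
  move=> nxcyd; apply/idP/idP => [|/and3P[/andP[xc _] yd _]]; last by rewrite xc yd in nxcyd.
  case/andP => /andP[/(le_r_mul_res dxy)[xc yd _] _] /eqP[E1 E2].
  by rewrite E1 in xc; rewrite E2 in yd; rewrite xc yd in nxcyd.
by move=> w /andP[/(le_r_mul_res dxy)[_ _ <-]].
Qed.

Lemma mobius_mul (R : pzRingType) x y u v : [disjoint hdom x & hdom y] ->
  le_r x u -> le_r y v ->
  mobius R (hmul x y) (hmul u v) = mobius R x u * mobius R y v.
Proof.
move=> dxy xu yv.
pose f w := mobius R x (res (hdom x) w) * mobius R y (res (hdom y) w).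
have fE c d : le_r x c -> le_r y d -> f (hmul c d) = mobius R x c * mobius R y d.
  move=> xc yd; have [dc dd] := (le_r_hdom xc, le_r_hdom yd).
  by rewrite /f -dc -dd res_mull ?res_mulr ?dc ?dd.
rewrite -fE //; apply/esym/(mobius_unique (f := f)); last exact: le_r_mul.
move=> w /(le_r_mul_res dxy)[xu' yv' ->].
rewrite sum_itv_mul //.
under eq_bigr => c /andP[xc _] do under eq_bigr => d /andP[yd _] do rewrite fE //.
rewrite -big_distrlr /= !mobius_itv_sum // -natrM mulnb; congr (nat_of_bool _)%:R.
apply/idP/eqP => [/andP[/eqP <- /eqP <-] //|E].
by have [<- <-] := hmul_inj dxy (le_r_hdom xu') (le_r_hdom yv') E; rewrite !eqxx.
Qed.

Lemma kprod_mul (R : pzRingType) (S T : {set L}) (f g : {ffun H -> R}) u v :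
  [disjoint S & T] -> hdom u = S -> hdom v = T -> kprod S T f g (hmul u v) = f u * g v.
Proof.
move=> dST du dv; have duv : [disjoint hdom u & hdom v] by rewrite du dv.
rewrite ffunE pair_big_dep (bigD1 (u, v)) /= ?du ?dv ?eqxx // big1 ?addr0 //.
move=> -[u' v'] /= /andP[/andP[/eqP du' /eqP dv'] nuv].
case: eqP => // /esym E; case/eqP: nuv.
by have [<- <-] := hmul_inj duv (etrans du' (esym du)) (etrans dv' (esym dv)) E.
Qed.

Lemma omega_mul (R : pzRingType) (S T : {set L}) x y : [disjoint S & T] -> hdom x = S -> hdom y = T ->
  kprod S T (omega R x) (omega R y) = omega R (hmul x y).
Proof.
move=> dST dx dy; have dxy : [disjoint hdom x & hdom y] by rewrite dx dy.
apply/ffunP => w; rewrite [RHS]ffunE; case: ifPn => [xyw|nxyw].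
  have [xu yv ->] := le_r_mul_res dxy xyw.
  by rewrite kprod_mul ?(le_r_hdom xu) ?(le_r_hdom yv) // !ffunE xu yv mobius_mul.
rewrite ffunE big1 // => u _; rewrite big1 // => v _; rewrite !ffunE.
case: eqP => // uvw; case: ifPn => xu; case: ifPn => yv; rewrite ?mulr0 ?mul0r //.
by case/negP: nxyw; rewrite -uvw le_r_mul // dx dy.
Qed.
End SetHopfMonoid.

Local Open Scope ring_scope.

Theorem mainTheorem12 (k : fieldType) (Hk : [pchar k] =i pred0)
  (L : finType) (H : setHopfData L)
  (HH : is_set_Hopf_monoid H) (Hc : is_commutative H) (Hcc : is_cocommutative H)
  (S T : {set L}) (HST : [disjoint S & T]) (x y : H)
  (Hx : hdom x = S) (Hy : hdom y = T) :
  kprod S T (omega k x) (omega k y) = omega k (hmul x y).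
Proof.
case: HH => [[hdom1 _ _ _] [[hdomM hdomD _] [[_ hmulA hmul1 coassoc] [counit hdelta_mul]]]].
apply: omega_mul => //.
- by move=> a; case: (hmul1 a).
- by move=> a; case: (hmul1 a).
- by move=> A B z sAz sBz dAB; case: (coassoc A B z sAz sBz dAB).
- by move=> z; rewrite (counit z).1.
- by move=> z; rewrite (counit z).2.
Qed.
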